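(* Let $r\ge 3$, let $\mathcal{H}$ be a $\mathrm{T}_r$-free $r$-graph with $\delta_{r-1}^{+}(\mathcal{H})\ge r$, and let $e=\{u_1,\ldots,u_r\}\in\mathcal{H}$ be an edge. Then $N_{\mathcal{H}}(e\setminus\{u_i\})\cap N_{\mathcal{H}}(u_i)=\emptyset$ for every $i\in[r]$. Moreover, the sets $N_{\mathcal{H}}(e\setminus\{u_1\}),\ldots,N_{\mathcal{H}}(e\setminus\{u_r\})$ are pairwise disjoint and each of them is independent in $\mathcal{H}$.
   Context: An $r$-graph $\mathcal{H}$ is a collection of $r$-subsets (edges) of a finite vertex set $V(\mathcal{H})$. The shadow is $\partial\mathcal{H}=\{e\in\binom{V(\mathcal{H})}{r-1}\colon e\subseteq E \text{ for some } E\in\mathcal{H}\}$. For $f\in\partial\mathcal{H}$, $N_{\mathcal{H}}(f)=\{v\in V(\mathcal{H})\colon f\cup\{v\}\in\mathcal{H}\}$. For a vertex $v$, $N_{\mathcal{H}}(v)=\{u\in V(\mathcal{H})\setminus\{v\}\colon \{u,v\}\subseteq E \text{ for some } E\in\mathcal{H}\}$. The minimum positive codegree is $\delta_{r-1}^{+}(\mathcal{H})=\min\{|N_{\mathcal{H}}(f)|\colon f\in\partial\mathcal{H}\}$. A set $I\subseteq V(\mathcal{H})$ is independent in $\mathcal{H}$ if every edge of $\mathcal{H}$ contains at most one vertex of $I$. The $r$-uniform generalized triangle is $\mathrm{T}_r=\{\{1,\ldots,r-1,r\},\{1,\ldots,r-1,r+1\},\{r,r+1,\ldots,2r-1\}\}$;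 $\mathcal{H}$ is $\mathrm{T}_r$-free if it contains no subhypergraph isomorphic to $\mathrm{T}_r$. *)

From mathcomp Require Import all_boot.
Set Implicit Arguments. Unset Strict Implicit. Unset Printing Implicit Defensive.

Definition uniform (V : finType) (r : nat) (H : {set {set V}}) : Prop :=
  forall E, E \in H -> #|E| = r.

Definition shadow (V : finType) (r : nat) (H : {set {set V}}) : {set {set V}} :=
  [set f : {set V} | (#|f| == r.-1) && [exists E in H, f \subset E]].

Definition codeg_nbhd (V : finType) (H : {set {set V}}) (f : {set V}) : {set V} :=
  [set v | f :|: [set v] \in H].

Definition vert_nbhd (V : finType) (H : {set {set V}}) (v : V) : {set V} :=
  [set u | (u != v) && [exists E in H, [set u; v] \subset E]].

Definition min_pos_codeg_ge (V : finType) (r : nat) (H : {set {set V}}) (k : nat) : Prop :=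
  forall f, f \in shadow r H -> k <= #|codeg_nbhd H f|.

Definition independent (V : finType) (H : {set {set V}}) (I : {set V}) : Prop :=
  forall E, E \in H -> #|E :&: I| <= 1.

(* H contains a copy of T_r = {S+a, S+b, {a,b}+C'} with |S| = r-1,
   a <> b outside S, and the third edge meeting S+a+b exactly in {a,b}. *)
Definition contains_Tr (V : finType) (r : nat) (H : {set {set V}}) : Prop :=
  exists S : {set V}, exists a b : V, exists C : {set V},
    [/\ #|S| = r.-1, a \notin S, b \notin S & a != b] /\
    [/\ S :|: [set a] \in H, S :|: [set b] \in H,
        C \in H, [set a; b] \subset C & [disjoint C & S]].

Definition Tr_free (V : finType) (r : nat) (H : {set {set V}}) : Prop :=
  ~ contains_Tr r H.

From mathcomp Require Import all_boot.
From mathcomp Require Import zify.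

Set Implicit Arguments.
Unset Strict Implicit.
Unset Printing Implicit Defensive.

(* Everything rests on one fact: for |S| = r - 1 the link N(S) is independent.
   If two distinct a, b in N(S) lay in a common edge E, we could push E off S
   one vertex at a time: for x in E ∩ S, the (r-1)-set E \ {x} has at least r
   neighbours, so one of them avoids S, and swapping it in for x keeps a, b
   and shrinks E ∩ S.  The final edge C ⊇ {a, b} is disjoint from S, and
   S + a, S + b, C form a copy of T_r.  For an edge e and u in e, the three
   claims then follow by applying this to S = e \ {u}, whose link contains u. *)

Lemma independent_eq (V : finType) (H : {set {set V}}) (I E : {set V}) (a b : V) :
  independent H I -> E \in H -> a \in E -> b \in E -> a \in I -> b \in I -> a = b.
Proof.
move=> indI EH aE bE aI bI; apply/eqP; apply: contraTT (indI E EH) => ab.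
by rewrite -ltnNge; apply/card_gt1P; exists a, b; rewrite !inE aE bE aI bI.
Qed.

Section Link.

Variables (V : finType) (r : nat) (H : {set {set V}}).
Hypothesis H_uniform : uniform r H.

Lemma codeg_nbhd_notin (S : {set V}) (c : V) :
  #|S| = r.-1 -> c \in codeg_nbhd H S -> c \notin S.
Proof.
rewrite inE => cardS /H_uniform cardSc; apply/negP => cS.
have : 0 < #|S| by apply/card_gt0P; exists c.
suff eqS : S :|: [set c] = S by rewrite eqS in cardSc; lia.
by apply/setUidPl; rewrite sub1set.
Qed.

Lemma edge_setD1_shadow (E : {set V}) (x : V) :
  E \in H -> x \in E -> E :\ x \in shadow r H.
Proof.
move=> EH xE; rewrite inE; apply/andP; split.
  by rewrite -(H_uniform EH) (cardsD1 x E) xE.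
by apply/existsP; exists E; rewrite EH subD1set.
Qed.

Hypothesis H_codeg : min_pos_codeg_ge r H r.

Lemma edge_exchange (S E : {set V}) (x : V) :
  #|S| = r.-1 -> E \in H -> x \in E ->
  exists2 y, y \notin S & E :\ x :|: [set y] \in H.
Proof.
move=> cardS EH xE.
have r_gt0 : 0 < r by rewrite -(H_uniform EH); apply/card_gt0P; exists x.
have : ~~ (codeg_nbhd H (E :\ x) \subset S).
  apply/negP => /subset_leq_card.
  have := H_codeg (edge_setD1_shadow EH xE); lia.
by case/subsetPn => y; rewrite inE => Exy yS; exists y.
Qed.

Lemma edge_avoiding (S E : {set V}) (a b : V) :
  #|S| = r.-1 -> a \notin S -> b \notin S -> E \in H -> a \in E -> b \in E ->
  exists C, [/\ C \in H, [set a; b] \subset C & [disjoint C & S]].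
Proof.
move=> cardS aS bS.
have [n] := ubnP #|E :&: S|; elim: n E => // n IH E ltES EH aE bE.
have [ES0 | [x /setIP [xE xS]]] := set_0Vmem (E :&: S).
  by exists E; rewrite -setI_eq0 ES0 subUset !sub1set aE bE.
have [y yS E'H] := edge_exchange cardS EH xE.
have neq_x z : z \notin S -> z != x by apply: contraNneq => ->.
apply: (IH _ _ E'H); rewrite ?inE ?neq_x ?aE ?bE //.
have sub : (E :\ x :|: [set y]) :&: S \subset (E :&: S) :\ x.
  apply/subsetP => z; rewrite !inE => /andP [/orP [/andP [zx zE] | /eqP zy] zS].
    by rewrite zx zE zS.
  by move: yS; rewrite -zy zS.
have := cardsD1 x (E :&: S); rewrite inE xE xS => cardES.
by have := subset_leq_card sub; lia.
Qed.

Hypothesis H_Tr_free : Tr_free r H.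

Lemma independent_codeg_nbhd (S : {set V}) :
  #|S| = r.-1 -> independent H (codeg_nbhd H S).
Proof.
move=> cardS E EH; rewrite leqNgt; apply/card_gt1P => -[a [b [aI bI ab]]].
move: aI bI => /setIP [aE aN] /setIP [bE bN].
have aS := codeg_nbhd_notin cardS aN; have bS := codeg_nbhd_notin cardS bN.
have [C [CH abC dCS]] := edge_avoiding cardS aS bS EH aE bE.
rewrite !inE in aN bN.
by apply: H_Tr_free; exists S, a, b, C.
Qed.

End Link.

Theorem lemma2p2 (V : finType) (r : nat) (H : {set {set V}})
  (e : {set V}) :
  3 <= r ->
  uniform r H ->
  Tr_free r H ->
  min_pos_codeg_ge r H r ->
  e \in H ->
  (forall u, u \in e ->
     codeg_nbhd H (e :\ u) :&: vert_nbhd H u = set0) /\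
  (forall u w, u \in e -> w \in e -> u != w ->
     [disjoint codeg_nbhd H (e :\ u) & codeg_nbhd H (e :\ w)]) /\
  (forall u, u \in e -> independent H (codeg_nbhd H (e :\ u))).
Proof.
move=> _ unif Tr_freeH codegH eH.
have card_link u : u \in e -> #|e :\ u| = r.-1.
  by move=> ue; have := unif _ eH; rewrite (cardsD1 u e) ue; lia.
have indep u : u \in e -> independent H (codeg_nbhd H (e :\ u)).
  by move=> ue; exact: independent_codeg_nbhd (card_link u ue).
have u_link u : u \in e -> u \in codeg_nbhd H (e :\ u).
  by move=> ue; rewrite inE setUC setD1K.
split; [|split] => //.
- move=> u ue; apply/setP => v; rewrite inE [v \in set0]inE.
  apply/andP => -[vN]; rewrite inE => /andP [vu /existsP [E /andP [EH]]].
  rewrite subUset !sub1set => /andP [vE uE].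
  by move/eqP: vu; apply; apply: independent_eq (indep u ue) EH vE uE vN (u_link u ue).
- move=> u w ue we uw; rewrite -setI_eq0; apply/eqP/setP => v.
  rewrite inE [v \in set0]inE; apply/andP => -[vNu vNw].
  have vu : v != u.
    apply: contraTneq (codeg_nbhd_notin unif (card_link w we) vNw) => ->.
    by rewrite negbK !inE uw.
  move/eqP: vu; apply; apply: independent_eq (indep u ue) _ _ _ vNu (u_link u ue).
  + by move: vNw; rewrite inE; apply.
  + by rewrite !inE eqxx orbT.
  + by rewrite !inE uw ue.
Qed.
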